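(* Let $n\geqslant 2$ and let $V_n$ be the set of integers $t$ such that there exist caterpillar trees $G$ (gene tree) and $S$ (species tree), both with $n$ leaves bijectively labeled by the same label set, for which $(G,S)$ has exactly $t$ coalescent histories. Then $$|V_n|\leqslant \frac12\left[\frac{1}{n}\binom{2n-2}{n-1}+\binom{n-1}{\lfloor (n-1)/2\rfloor}\right].$$
   Context: All trees are binary, rooted, leaf-labeled. A caterpillar tree is one in which some internal node is descended from all other internal nodes. For a caterpillar with $n$ leaves, internal nodes are numbered $1,\dots,n-1$ from the cherry (the internal node with exactly two descendant leaves) to the root, and internal edge $i$ is the edge immediately above node $i$, with an extra edge $n-1$ above the root. A coalescent history for a gene tree $G$ and species tree $S$ on the same label set is a map $h$ from internal nodes of $G$ to internal edges of $S$ such that (1) every label of a leaf below node $v$ of $G$ labels a leaf of $S$ below edge $h(v)$, and (2) if $v_2$ is descended from $v_1$ in $G$ then $h(v_2)$ is descended from $h(v_1)$ in $S$ (nodes and edges count as descended from themselves). *)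

From mathcomp Require Import all_boot all_order all_algebra.
Set Implicit Arguments. Unset Strict Implicit. Unset Printing Implicit Defensive.

Inductive tree : Type := Leaf of nat | Node of tree & tree.

Fixpoint leaves (t : tree) : seq nat :=
  match t with Leaf a => [:: a] | Node l r => leaves l ++ leaves r end.

(* Nodes are addressed by paths from the root (false = left, true = right).
   Node p is descended from node q iff q is a prefix of p. *)
Fixpoint subt (t : tree) (p : seq bool) : option tree :=
  match p with
  | [::] => Some t
  | b :: p' => match t with Leaf _ => None | Node l r => subt (if b then r else l) p' end
  end.

Fixpoint inodes (t : tree) : seq (seq bool) :=
  match t with
  | Leaf _ => [::]
  | Node l r => [::] :: (map (cons false) (inodes l) ++ map (cons true) (inodes r))
  end.

Definition leaves_below (t : tree) (p : seq bool) : seq nat :=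
  if subt t p is Some s then leaves s else [::].

Definition labeled (n : nat) (t : tree) : Prop := perm_eq (leaves t) (iota 0 n).

Definition caterpillar (t : tree) : Prop :=
  exists2 p, p \in inodes t & forall q, q \in inodes t -> prefix q p.

(* Coalescent histories: maps h from internal nodes of G to internal edges of S;
   the internal edge of S above internal node u of S is identified with u, so a
   leaf lies below that edge iff it lies below u, and edge u is descended from
   edge u' iff node u is descended from node u'. *)
Definition is_history (G S : tree)
    (h : {ffun 'I_(size (inodes G)) -> 'I_(size (inodes S))}) : bool :=
  let vG (i : 'I_(size (inodes G))) := nth [::] (inodes G) i in
  let vS (j : 'I_(size (inodes S))) := nth [::] (inodes S) j in
  [forall i, all (fun a => a \in leaves_below S (vS (h i))) (leaves_below G (vG i))]
  && [forall i, forall j, prefix (vG i) (vG j) ==> prefix (vS (h i)) (vS (h j))].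

Arguments is_history : clear implicits.

Definition nhist (G S : tree) : nat :=
  #|[set h | is_history G S h]|.

Definition Vn (n t : nat) : Prop :=
  exists G S, [/\ caterpillar G, caterpillar S, labeled n G, labeled n S
                & nhist G S = t].

(* Index the k = n - 1 internal nodes of a caterpillar from the root down, so that
   node i is an ancestor of node j iff i <= j.  For caterpillars G and S on the same
   labels, let M_i be the deepest node of S whose clade contains the clade of node i
   of G.  Then M is a Dyck path, and the coalescent histories of (G, S) are exactly
   the Dyck paths lying below M, so their number is the number N(M) of Dyck paths
   below M.  Reflection in the antidiagonal is an order-preserving involution of Dyck
   paths, hence N is constant on its orbits and takes at most (C_k + F_k)/2 values,
   where C_k = binom(2k, k)/(k + 1) is the number of Dyck paths and F_k the number of
   self-conjugate ones.  A self-conjugate path is determined by its part beyond the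
   antidiagonal, which is a ballot sequence; summing the ballot numbers over all
   possible final heights gives F_k <= binom(k, k/2). *)

From mathcomp Require Import all_boot all_order all_algebra.
From mathcomp Require Import zify lra.
From Stdlib Require Import ClassicalEpsilon.
Import GRing.Theory Num.Theory.
Set Implicit Arguments. Unset Strict Implicit. Unset Printing Implicit Defensive.

Lemma count_iota_leq (P : pred nat) m : count P (iota 0 m) <= m.
Proof. by rewrite -{2}(size_iota 0 m) count_size. Qed.

Lemma downclosed_count (P : pred nat) k :
  (forall a b, a <= b -> b < k -> P b -> P a) ->
  forall d, d < k -> P d = (d < count P (iota 0 k)).
Proof.
elim: k => [//|k IH] down d.
rewrite -[k.+1]addn1 iotaD count_cat /= addn0.
case Pk: (P k).
  have -> : count P (iota 0 k) = k.
    apply/eqP; rewrite -{2}(size_iota 0 k) -all_count; apply/allP => x.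
    by rewrite mem_iota => /andP[_ /= xk]; apply: (down x k) => //; rewrite ltnW.
  by rewrite addn1 ltnS => dk; rewrite dk (down d k).
rewrite addn0 addn1 ltnS leq_eqVlt => /orP[/eqP->|dk].
  by rewrite Pk ltnNge count_iota_leq.
by apply: IH dk => a b ab bk; apply: down => //; apply: ltnW.
Qed.

Lemma upclosed_count (P : pred nat) k :
  (forall a b, a <= b -> b < k -> P a -> P b) ->
  forall i, i < k -> P i = (k - count P (iota 0 k) <= i).
Proof.
move=> up i ik.
have downC a b : a <= b -> b < k -> predC P b -> predC P a.
  by move=> ab bk; apply: contra; apply: up.
rewrite leqNgt -{1}(size_iota 0 k) -(count_predC P) addKn.
by rewrite -(downclosed_count downC ik) /= negbK.
Qed.

Lemma sum_count_fibers (T U : eqType) (f : T -> U) (a : pred T) (s : seq T) (V : seq U) :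
  uniq V -> {subset map f s <= V} ->
  \sum_(v <- V) count (fun x => a x && (f x == v)) s = count a s.
Proof.
move=> uV; elim: s => [|x s IH] sub /=; first by rewrite big1.
rewrite big_split /= IH => [|v vs]; last by apply: sub; rewrite inE vs orbT.
congr (_ + _); case: (a x) => /=; last by rewrite big1.
rewrite -big_mkcond sum1_count (eq_count (a2 := pred1 (f x))) => [|v]; last exact: eq_sym.
by rewrite count_uniq_mem // sub // mem_head.
Qed.

Lemma size_undup_map_invariant (T U : eqType) (s : seq T) (g : T -> T) (f : T -> U) :
  {in s, forall x, g x \in s} -> {in s, forall x, f (g x) = f x} ->
  2 * size (undup (map f s)) <= size s + count (fun x => g x == x) s.
Proof.
move=> gs fg; set V := undup (map f s).
have sub : {subset map f s <= V} by move=> v; rewrite mem_undup.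
rewrite -(count_predT s) -(sum_count_fibers predT (undup_uniq _) sub).
rewrite -(sum_count_fibers (fun x => g x == x) (undup_uniq _) sub) -big_split /=.
have -> : 2 * size V = \sum_(v <- V) 2 by rewrite big_const_seq count_predT iter_addn_0.
rewrite !big_seq.
(* Each fiber of [f] contains a fixed point of [g] or two points [x != g x]. *)
apply: leq_sum => v; rewrite mem_undup => /mapP[x xs ->].
case: (eqVneq (g x) x) => gx.
  have fiber : 0 < count (fun y => f y == f x) s.
    by rewrite -has_count; apply/hasP; exists x.
  have fixed : 0 < count (fun y => (g y == y) && (f y == f x)) s.
    by rewrite -has_count; apply/hasP; exists x; rewrite ?gx ?eqxx.
  exact: leq_add fiber fixed.
apply: leq_trans (leq_addr _ _).
rewrite -[2]/(size [:: x; g x]) -size_filter; apply: uniq_leq_size.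
  by rewrite /= inE eq_sym gx.
by move=> y; rewrite !inE => /orP[] /eqP->; rewrite mem_filter ?fg ?gs ?xs ?eqxx.
Qed.

(** * Ballot sequences *)

Fixpoint under_diag (c : nat) (l : seq nat) : bool :=
  if l is x :: l' then (x <= c) && under_diag c.+1 l' else true.

Lemma under_diagP c l :
  reflect (forall i, i < size l -> nth 0 l i <= c + i) (under_diag c l).
Proof.
elim: l c => [|x l IH] c /=; first by constructor.
apply: (iffP andP) => [[xc /IH lc] [|i] /=|H]; first by rewrite addn0.
  by rewrite ltnS -addSnnS; apply: lc.
split; first by have := H 0; rewrite addn0; apply.
by apply/IH => i il; rewrite addSnnS; apply: (H i.+1).
Qed.

Fixpoint ballot_seqs (L c lo : nat) : seq (seq nat) :=
  if L is L'.+1 then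
    [seq v :: t | v <- iota lo (c.+1 - lo), t <- ballot_seqs L' c.+1 v]
  else [:: [::]].

Lemma mem_iota_interval lo c x : (x \in iota lo (c.+1 - lo)) = (lo <= x <= c).
Proof. by rewrite mem_iota; case: (leqP lo x) => //= lox; lia. Qed.

Lemma mem_ballot_seqs L c lo l :
  (l \in ballot_seqs L c lo) = [&& size l == L, path leq lo l & under_diag c l].
Proof.
elim: L c lo l => [|L IH] c lo [|x t] //=.
  by apply/negbTE/allpairsPdep => -[v [t [_ _]]].
apply/allpairsPdep/and3P => [[v [t' [vin t'in [-> ->]]]]|].
  move: vin t'in; rewrite mem_iota_interval IH => /andP[lov vc] /and3P[/eqP-> -> ->].
  by rewrite eqxx lov vc.
move=> [sz /andP[lox xt] /andP[xc tc]]; exists x, t; split => //.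
  by rewrite mem_iota_interval lox.
by rewrite IH -(eqSS _ L) sz xt tc.
Qed.

Lemma mem_ballot_seqs0 L c l :
  (l \in ballot_seqs L c 0) = [&& size l == L, sorted leq l & under_diag c l].
Proof.
rewrite mem_ballot_seqs path_sortedE; last exact: leq_trans.
by have -> : all (leq 0) l by apply/allP.
Qed.

Lemma ballot_seqs_size L c l : l \in ballot_seqs L c 0 -> size l = L.
Proof. by rewrite mem_ballot_seqs0 => /and3P[/eqP]. Qed.

Lemma ballot_seqs_nondecr L c l i j : l \in ballot_seqs L c 0 ->
  i <= j -> j < L -> nth 0 l i <= nth 0 l j.
Proof.
rewrite mem_ballot_seqs0 => /and3P[/eqP sz sl _] ij jL; have iL := leq_ltn_trans ij jL.
by apply: (sorted_leq_nth leq_trans leqnn 0 sl); rewrite // inE /= sz.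
Qed.

Lemma ballot_seqs_bound L c l i : l \in ballot_seqs L c 0 -> i < L -> nth 0 l i <= c + i.
Proof.
by rewrite mem_ballot_seqs0 => /and3P[/eqP sz _ /under_diagP lc] iL; apply: lc; rewrite sz.
Qed.

Lemma ballot_seqs_intro L c l : size l = L ->
  (forall i, i.+1 < L -> nth 0 l i <= nth 0 l i.+1) ->
  (forall i, i < L -> nth 0 l i <= c + i) -> l \in ballot_seqs L c 0.
Proof.
move=> sz nondecr lc; rewrite mem_ballot_seqs0 sz eqxx /=.
apply/andP; split; first by apply/(sortedP 0) => i; rewrite sz; apply: nondecr.
by apply/under_diagP => i; rewrite sz; apply: lc.
Qed.

Lemma ballot_seqs_uniq L c lo : uniq (ballot_seqs L c lo).
Proof.
elim: L c lo => [//|L IH] c lo /=.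
apply: allpairs_uniq_dep => [|v _|[v1 t1] [v2 t2] _ _ /= [-> ->]] //.
exact: iota_uniq.
Qed.

Lemma ballot_seqs_split L c lo : lo <= c ->
  ballot_seqs L.+1 c lo = [seq lo :: t | t <- ballot_seqs L c.+1 lo] ++ ballot_seqs L.+1 c lo.+1.
Proof. by move=> loc; rewrite /= subSS subSn. Qed.

Lemma ballot_seqs_empty L c : ballot_seqs L.+1 c c.+1 = [::].
Proof. by rewrite /= subnn. Qed.

Definition ballot_number (L d : nat) : int :=
  ('C(L.*2 + d, L))%:Z - (if L is L'.+1 then ('C(L.*2 + d, L'))%:Z else 0).

Lemma ballot_number_S0 L : ballot_number L.+1 0 = ballot_number L 1.
Proof.
rewrite /ballot_number !addn0 doubleS addn1 binS.
have -> : 'C(L.*2.+1, L.+1) = 'C(L.*2.+1, L).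
  by rewrite -bin_sub; [congr 'C(_, _) | ]; rewrite -addnn; lia.
case: L => [|L] /=; first by rewrite !bin0.
rewrite (binS L.+1.*2.+1 L) !PoszD; lia.
Qed.

Lemma ballot_number_SS L d :
  ballot_number L.+1 d.+1 = (ballot_number L d.+2 + ballot_number L.+1 d)%R.
Proof.
rewrite /ballot_number doubleS !addSn !addnS binS.
case: L => [|L]; first by rewrite !bin0 !PoszD; lia.
rewrite (binS (L.+1.*2 + d).+2 L) !PoszD; lia.
Qed.

Lemma size_ballot_seqs L d lo : Posz (size (ballot_seqs L (lo + d) lo)) = ballot_number L d.
Proof.
elim: L d lo => [|L IH] d lo; first by rewrite /ballot_number bin0.
elim: d lo => [|d IHd] lo.
  by rewrite addn0 ballot_seqs_split // ballot_seqs_empty cats0 size_map -addn1 IH ballot_number_S0.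
rewrite ballot_seqs_split ?leq_addr // size_cat size_map PoszD addnS -addSn IHd.
have -> : (lo.+1 + d).+1 = lo + d.+2 by rewrite addSn !addnS.
by rewrite IH ballot_number_SS addrC.
Qed.

(** * Dyck paths and their conjugation *)

Section DyckSequences.
Variable k : nat.

(* Dyck paths of semilength [k], as nondecreasing sequences [M] of length [k] with [M_i <= i]. *)
Definition dyck := ballot_seqs k 0 0.

Lemma card_dyck : k.+1 * size dyck = 'C(k.*2, k).
Proof.
have := size_ballot_seqs k 0 0; rewrite /dyck /ballot_number.
case: k => [//|k'] sz; rewrite !addn0 in sz; apply/eqP; rewrite -eqz_nat; apply/eqP.
have := congr1 Posz (mul_bin_left k'.+1.*2 k').
rewrite (_ : k'.+1.*2 - k' = k'.+2); last lia.
rewrite !PoszM sz; lia.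
Qed.

Lemma dyck_size M : M \in dyck -> size M = k.
Proof. exact: ballot_seqs_size. Qed.

Lemma dyck_nondecr M i j : M \in dyck -> i <= j -> j < k -> nth 0 M i <= nth 0 M j.
Proof. exact: ballot_seqs_nondecr. Qed.

Lemma dyck_diag M i : M \in dyck -> i < k -> nth 0 M i <= i.
Proof. exact: ballot_seqs_bound. Qed.

Lemma dyckP M : size M = k ->
  (forall i, i.+1 < k -> nth 0 M i <= nth 0 M i.+1) ->
  (forall i, i < k -> nth 0 M i <= i) -> M \in dyck.
Proof. by move=> sz nondecr diag; rewrite /dyck; apply: (ballot_seqs_intro (c := 0)). Qed.

Lemma dyck_count_geq M c t : M \in dyck -> 0 < t <= k ->
  (t <= count (fun l => c <= nth 0 M l) (iota 0 k)) = (c <= nth 0 M (k - t)).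
Proof.
move=> dM /andP[t0 tk]; have := count_iota_leq (fun l => c <= nth 0 M l) k.
rewrite (@upclosed_count (fun l => c <= nth 0 M l) k); last lia.
  by move=> ?; apply/idP/idP; lia.
by move=> a b ab bk /leq_trans; apply; apply: dyck_nondecr.
Qed.

Definition pointwise_le (h M : seq nat) :=
  all (fun i => nth 0 h i <= nth 0 M i) (iota 0 k).

(* Reflection in the antidiagonal. *)
Definition conj M := [seq count (fun l => k - i <= nth 0 M l) (iota 0 k) | i <- iota 0 k].

Lemma nth_conj M i : i < k ->
  nth 0 (conj M) i = count (fun l => k - i <= nth 0 M l) (iota 0 k).
Proof. by move=> ik; rewrite (nth_map 0) ?size_iota // nth_iota. Qed.

Lemma conj_dyck M : M \in dyck -> conj M \in dyck.
Proof.
move=> dM; apply: dyckP => [|i ik|i ik]; first by rewrite size_map size_iota.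
  rewrite !nth_conj ?(ltnW ik) //; apply: sub_count => l /=.
  by apply: leq_trans; rewrite leq_sub2l.
rewrite nth_conj //; set c := count _ _.
have ck : c <= k by apply: count_iota_leq.
case: (posnP c) => [->//|c0].
have ki : k - i <= nth 0 M (k - c) by rewrite -dyck_count_geq ?c0.
have := @dyck_diag M (k - c) dM; lia.
Qed.

Lemma conjK M : M \in dyck -> conj (conj M) = M.
Proof.
move=> dM; have dcM := conj_dyck dM.
apply: (@eq_from_nth _ 0) => [|i]; first by rewrite (dyck_size dM) size_map size_iota.
rewrite size_map size_iota => ik; rewrite nth_conj //; set c := count _ _.
have ck : c <= k by apply: count_iota_leq.
have Mi := dyck_diag dM ik.
suff leqc t : (t <= c) = (t <= nth 0 M i).
  by apply/eqP; rewrite eqn_leq leqc leqnn -leqc leqnn.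
case: t => [//|t]; case: (leqP t.+1 k) => tk; last by apply/idP/idP; lia.
rewrite /c dyck_count_geq // nth_conj; last lia.
rewrite (_ : k - (k - t.+1) = t.+1); last lia.
rewrite dyck_count_geq //; last lia.
by rewrite (_ : k - (k - i) = i); last lia.
Qed.

Lemma conj_le h M : h \in dyck -> M \in dyck ->
  pointwise_le h M -> pointwise_le (conj h) (conj M).
Proof.
move=> dh dM /allP hM; apply/allP => i; rewrite mem_iota /= => ik.
rewrite !nth_conj //; apply: sub_count => l /= /leq_trans; apply.
case: (ltnP l k) => lk; first by apply: hM; rewrite mem_iota.
by rewrite !nth_default ?(dyck_size dh) ?(dyck_size dM).
Qed.

Definition nbelow M := count (pointwise_le ^~ M) dyck.

Lemma nbelow_conj_leq M : M \in dyck -> nbelow M <= nbelow (conj M).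
Proof.
move=> dM; rewrite /nbelow -!size_filter -(size_map conj).
apply: uniq_leq_size => [|y /mapP[h]].
  rewrite map_inj_in_uniq ?filter_uniq ?ballot_seqs_uniq // => x y.
  by rewrite !mem_filter => /andP[_ dx] /andP[_ dy] /(congr1 conj); rewrite !conjK.
by rewrite !mem_filter => /andP[hM dh] ->; rewrite conj_dyck // conj_le.
Qed.

Lemma nbelow_conj M : M \in dyck -> nbelow (conj M) = nbelow M.
Proof.
move=> dM; apply/eqP; rewrite eqn_leq nbelow_conj_leq ?conj_dyck //.
by rewrite -{2}(conjK dM) nbelow_conj_leq ?conj_dyck.
Qed.

End DyckSequences.

(** * Self-conjugate Dyck paths *)

Definition tail_codes k := flatten [seq ballot_seqs j (k - j.*2) 0 | j <- iota 0 (k./2).+1].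

Lemma size_tail_codes_upto k J : J.*2 <= k ->
  size (flatten [seq ballot_seqs j (k - j.*2) 0 | j <- iota 0 J.+1]) = 'C(k, J).
Proof.
elim: J => [|J IH] Jk; first by rewrite /= bin0.
apply/eqP; rewrite -eqz_nat; apply/eqP.
rewrite -[J.+2]addn1 iotaD map_cat flatten_cat size_cat PoszD IH; last first.
  by move: Jk; rewrite doubleS; lia.
have := size_ballot_seqs J.+1 (k - J.+1.*2) 0; rewrite /= !add0n cats0 => ->.
rewrite /ballot_number subnKC //; lia.
Qed.

Lemma size_tail_codes k : size (tail_codes k) = 'C(k, k./2).
Proof. by apply: size_tail_codes_upto; rewrite -geq_half_double. Qed.

Section SelfConjugate.
Variable k : nat.

Definition self_conj := [seq M <- dyck k | conj k M == M].

Definition tail_len M := count (fun i => k <= i + nth 0 M i) (iota 0 k).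

Definition tail_code M := [seq nth 0 M i - tail_len M | i <- iota (k - tail_len M) (tail_len M)].

Lemma tail_lenE M i : M \in dyck k -> i < k -> (k <= i + nth 0 M i) = (k - tail_len M <= i).
Proof.
move=> dM ik; rewrite /tail_len (@upclosed_count (fun i => k <= i + nth 0 M i) k) //.
by move=> a b ab bk /leq_trans; apply; rewrite leq_add // (dyck_nondecr dM).
Qed.

Lemma tail_len_leq M : tail_len M <= k.
Proof. exact: count_iota_leq. Qed.

Lemma tail_geq M i : M \in dyck k -> k - tail_len M <= i -> i < k -> tail_len M <= nth 0 M i.
Proof.
move=> dM ji ik; have := tail_len_leq M; case: (posnP (tail_len M)) => [->//|j0 jk].
have jk' : k - tail_len M < k by lia.
have := tail_lenE dM jk'; rewrite leqnn => /idP.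
have := dyck_nondecr dM ji ik; lia.
Qed.

Lemma tail_len_half M : M \in dyck k -> (tail_len M).*2 <= k.
Proof.
move=> dM; have jk := tail_len_leq M; rewrite -addnn.
case: (posnP (tail_len M)) => [->//|j0].
have jk' : k - tail_len M < k by lia.
have := tail_lenE dM jk'; rewrite leqnn => /idP.
have := dyck_diag dM jk'; lia.
Qed.

Lemma nth_tail_code M s : s < tail_len M ->
  nth 0 (tail_code M) s = nth 0 M (k - tail_len M + s) - tail_len M.
Proof. by move=> sj; rewrite (nth_map 0) ?size_iota // nth_iota. Qed.

Lemma tail_code_in M : M \in dyck k -> tail_code M \in tail_codes k.
Proof.
move=> dM; have jk := tail_len_leq M; have jh := tail_len_half dM.
apply/flatten_mapP; exists (tail_len M); first by rewrite mem_iota ltnS geq_half_double.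
apply: ballot_seqs_intro => [|s sj|s sj]; first by rewrite size_map size_iota.
  by rewrite !nth_tail_code ?(ltnW sj) // leq_sub2r // (dyck_nondecr dM) //; lia.
rewrite nth_tail_code //; have ks : k - tail_len M + s < k by lia.
have := dyck_diag dM ks; rewrite -addnn in jh *; lia.
Qed.

Lemma tail_code_inj : {in self_conj &, injective tail_code}.
Proof.
move=> M M'; rewrite !mem_filter => /andP[/eqP cM dM] /andP[/eqP cM' dM'] eqc.
have eqj : tail_len M = tail_len M'.
  by have := congr1 size eqc; rewrite !size_map !size_iota.
set j := tail_len M in eqj.
have tailE i : k - j <= i -> i < k -> nth 0 M i = nth 0 M' i.
  move=> ji ik; have := congr1 (fun z => nth 0 z (i - (k - j))) eqc.
  have := tail_geq dM ji ik; rewrite eqj in ji *; have := tail_geq dM' ji ik.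
  rewrite /= !nth_tail_code -?eqj -/j; try lia.
  by rewrite subnKC //; lia.
(* Below index k - j, a self-conjugate sequence is read off its tail through [conj]. *)
have head_small N l i : N \in dyck k -> tail_len N = j -> l < k - j -> i < k - j ->
    nth 0 N l < k - i.
  move=> dN eN lj ij; have lk : l < k by lia.
  have ik : i < k by lia.
  have Ni : i + nth 0 N i < k by rewrite ltnNge (tail_lenE dN ik) eN -ltnNge.
  have Nl : l + nth 0 N l < k by rewrite ltnNge (tail_lenE dN lk) eN -ltnNge.
  case: (leqP l i) => li; last lia.
  by have := dyck_nondecr dN li ik; lia.
apply: (@eq_from_nth _ 0) => [|i]; first by rewrite (dyck_size dM) (dyck_size dM').
rewrite (dyck_size dM) => ik; case: (leqP (k - j) i) => ij; first exact: tailE.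
rewrite -cM -cM' !nth_conj //; apply: eq_in_count => l; rewrite mem_iota /= => lk.
case: (leqP (k - j) l) => lj; first by rewrite tailE.
by rewrite leqNgt [RHS]leqNgt (head_small M l i) // (head_small M' l i) // -eqj.
Qed.

Lemma size_self_conj : size self_conj <= 'C(k, k./2).
Proof.
rewrite -size_tail_codes -(size_map tail_code); apply: uniq_leq_size.
  by rewrite map_inj_in_uniq ?filter_uniq ?ballot_seqs_uniq //; apply: tail_code_inj.
by move=> z /mapP[M]; rewrite mem_filter => /andP[_ dM] ->; apply: tail_code_in.
Qed.

End SelfConjugate.

(** * Caterpillars *)

Inductive cater : tree -> Prop :=
| cater_cherry a b : cater (Node (Leaf a) (Leaf b))
| cater_left a t : cater t -> cater (Node (Leaf a) t)
| cater_right a t : cater t -> cater (Node t (Leaf a)).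

Lemma inodes_leafl a t : inodes (Node (Leaf a) t) = [::] :: map (cons true) (inodes t).
Proof. by []. Qed.

Lemma inodes_leafr a t : inodes (Node t (Leaf a)) = [::] :: map (cons false) (inodes t).
Proof. by rewrite /= cats0. Qed.

Lemma deepest_inode_cons b (s : seq (seq bool)) : [::] \in s ->
  (exists2 p, p \in [::] :: map (cons b) s & {in [::] :: map (cons b) s, forall q, prefix q p}) ->
  exists2 p, p \in s & {in s, forall q, prefix q p}.
Proof.
move=> s0 [p]; rewrite inE => /orP[/eqP->|/mapP[p' p's ->]] deep.
  by have := deep [:: b]; rewrite inE map_f ?orbT // => /(_ isT).
exists p' => // q qs.
by have := deep (b :: q); rewrite inE map_f ?orbT // prefix_cons eqxx => /(_ isT).
Qed.

Lemma caterpillar_cater t : caterpillar t -> cater t.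
Proof.
elim: t => [a [p]//|[a|l1 l2] IHl [b|r1 r2] IHr cat_t].
- exact: cater_cherry.
- by apply/cater_left/IHr/(@deepest_inode_cons true).
- apply/cater_right/IHl/(@deepest_inode_cons false) => //.
  by move: cat_t; rewrite /caterpillar inodes_leafr.
- case: cat_t => p _ deep.
  have /deep : [:: false] \in inodes (Node (Node l1 l2) (Node r1 r2)) by rewrite /= !inE.
  have /deep : [:: true] \in inodes (Node (Node l1 l2) (Node r1 r2)).
    by rewrite /= !(inE, mem_cat) eqxx !orbT.
  by case: p {deep} => [|[] p].
Qed.

Lemma size_leaves t : size (leaves t) = (size (inodes t)).+1.
Proof.
by elim: t => [//|l IHl r IHr] /=; rewrite !size_cat IHl IHr !size_map addSn addnS.
Qed.

Lemma cater_prefix t i j : cater t -> i < size (inodes t) -> j < size (inodes t) ->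
  prefix (nth [::] (inodes t) i) (nth [::] (inodes t) j) = (i <= j).
Proof.
have chain b (s : seq (seq bool)) i' j' :
    (forall i j, i < size s -> j < size s -> prefix (nth [::] s i) (nth [::] s j) = (i <= j)) ->
    i' <= size s -> j' <= size s ->
    prefix (nth [::] ([::] :: map (cons b) s) i') (nth [::] ([::] :: map (cons b) s) j') = (i' <= j').
  by move=> IH; case: i' j' => [|i'] [|j'] //= *; rewrite !(nth_map [::]) // prefix_cons eqxx IH.
move=> ct; elim: ct i j => [a b|a t' _ IH|a t' _ IH] i j.
- by case: i => [|[]]; case: j => [|[]].
- by rewrite inodes_leafl /= size_map !ltnS; apply: chain.
- by rewrite inodes_leafr /= size_map !ltnS; apply: chain.
Qed.

Definition clade t i := leaves_below t (nth [::] (inodes t) i).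

Lemma clade0 t : clade t 0 = leaves t.
Proof. by case: t. Qed.

Lemma clade_leafl a t i : i < size (inodes t) -> clade (Node (Leaf a) t) i.+1 = clade t i.
Proof. by move=> it; rewrite /clade inodes_leafl /= (nth_map [::]). Qed.

Lemma clade_leafr a t i : i < size (inodes t) -> clade (Node t (Leaf a)) i.+1 = clade t i.
Proof. by move=> it; rewrite /clade inodes_leafr /= (nth_map [::]). Qed.

Lemma size_clade t i : cater t -> i < size (inodes t) -> size (clade t i) = size (leaves t) - i.
Proof.
move=> ct; elim: ct i => [a b|a t' _ IH|a t' _ IH] [|i] //; rewrite ?clade0 ?subn0 //.
- by rewrite inodes_leafl /= size_map ltnS => it; rewrite clade_leafl // IH.
- rewrite inodes_leafr /= size_map ltnS => it.
  by rewrite clade_leafr // IH // size_cat addn1 subSS.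
Qed.

Lemma clade_subseq t i j : cater t -> i <= j -> j < size (inodes t) ->
  subseq (clade t j) (clade t i).
Proof.
move=> ct; elim: ct i j => [a b|a t' _ IH|a t' _ IH] i j ij.
- by case: j ij => [|[]] //; rewrite leqn0 => /eqP->.
- rewrite inodes_leafl /= size_map ltnS; case: j ij => [|j]; first by rewrite leqn0 => /eqP->.
  move=> ij jt; rewrite clade_leafl //; case: i ij => [_|i ij]; last by rewrite clade_leafl ?IH //; lia.
  by apply: subseq_trans (IH 0 j isT jt) _; rewrite !clade0 subseq_cons.
- rewrite inodes_leafr /= size_map ltnS; case: j ij => [|j]; first by rewrite leqn0 => /eqP->.
  move=> ij jt; rewrite clade_leafr //; case: i ij => [_|i ij]; last by rewrite clade_leafr ?IH //; lia.
  by apply: subseq_trans (IH 0 j isT jt) _; rewrite !clade0 prefix_subseq.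
Qed.

(** * Coalescent histories of caterpillar pairs *)

Definition ffun_seq a b (h : {ffun 'I_a -> 'I_b}) : seq nat := [seq val (h i) | i <- enum 'I_a].

Lemma size_ffun_seq a b (h : {ffun 'I_a -> 'I_b}) : size (ffun_seq h) = a.
Proof. by rewrite size_map size_enum_ord. Qed.

Lemma nth_ffun_seq a b (h : {ffun 'I_a -> 'I_b}) (i : 'I_a) : nth 0 (ffun_seq h) i = h i.
Proof. by rewrite (nth_map i) ?size_enum_ord // nth_ord_enum. Qed.

Lemma card_ffun_seq a b (P : pred {ffun 'I_a -> 'I_b}) (L : seq (seq nat)) :
  uniq L -> {in L, forall l, size l = a /\ all (fun x => x < b) l} ->
  P =1 (fun h => ffun_seq h \in L) -> #|[set h | P h]| = size L.
Proof.
move=> uL sizeL PL; rewrite cardE -(size_map (@ffun_seq a b)); apply: perm_size.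
have inj : injective (@ffun_seq a b).
  by move=> h1 h2 e; apply/ffunP => i; apply: ord_inj; rewrite -!nth_ffun_seq e.
apply: uniq_perm => [|//|l]; first by rewrite map_inj_uniq ?enum_uniq.
apply/mapP/idP => [[h]|lL]; first by rewrite mem_enum inE PL => hL ->.
have [sz /(all_nthP 0) lb] := sizeL l lL.
have lib (i : 'I_a) : nth 0 l i < b by apply: lb; rewrite sz.
set h := [ffun i => Ordinal (lib i)].
have hl : ffun_seq h = l.
  apply: (@eq_from_nth _ 0) => [|i]; first by rewrite size_ffun_seq sz.
  by rewrite size_ffun_seq => ia; rewrite (nth_ffun_seq _ (Ordinal ia)) ffunE.
by exists h; rewrite // mem_enum inE PL hl.
Qed.

Lemma ffun_seq_below a b (h : {ffun 'I_a -> 'I_b}) M : M \in dyck a ->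
  (ffun_seq h \in [seq l <- dyck a | pointwise_le a l M]) =
  [forall i, h i <= nth 0 M i] && [forall i : 'I_a, forall j : 'I_a, (i <= j) ==> (h i <= h j)].
Proof.
move=> dM; rewrite mem_filter.
apply/andP/andP => [[/allP hM dh]|[/forallP hM /forallP hmono]]; split.
- apply/forallP => i; have := hM i; rewrite mem_iota ltn_ord nth_ffun_seq; exact.
- apply/forallP => i; apply/forallP => j; apply/implyP => ij.
  by rewrite -!nth_ffun_seq (dyck_nondecr dh).
- apply/allP => i; rewrite mem_iota /= => ia.
  by rewrite (nth_ffun_seq _ (Ordinal ia)) hM.
apply: dyckP => [|i ia|i ia]; first by rewrite size_ffun_seq.
  have i1a : i < a by lia.
  rewrite (nth_ffun_seq _ (Ordinal i1a)) (nth_ffun_seq _ (Ordinal ia)).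
  by have /forallP/(_ (Ordinal ia))/implyP := hmono (Ordinal i1a); apply.
rewrite (nth_ffun_seq _ (Ordinal ia)); apply: leq_trans (hM (Ordinal ia)) _.
exact: dyck_diag dM ia.
Qed.

Lemma size_leaves_labeled n t : labeled n t -> size (leaves t) = n.
Proof. by move/perm_size; rewrite size_iota. Qed.

Lemma size_inodes_labeled n t : labeled n t -> size (inodes t) = n.-1.
Proof. by move/size_leaves_labeled; rewrite size_leaves => <-. Qed.

Section Histories.
Variables (n : nat) (G S : tree).
Hypotheses (cG : cater G) (cS : cater S) (lG : labeled n G) (lS : labeled n S).

Let k := n.-1.

Let szG : size (inodes G) = k := size_inodes_labeled lG.
Let szS : size (inodes S) = k := size_inodes_labeled lS.

Definition fits i d := all (mem (clade S d)) (clade G i).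

Lemma fits_down i d d' : d' <= d -> d < k -> fits i d -> fits i d'.
Proof.
move=> dd dk /allP iSd; apply/allP => x /iSd; apply: mem_subseq.
by apply: clade_subseq; rewrite ?szS.
Qed.

Lemma fits_up i i' d : i <= i' -> i' < k -> fits i d -> fits i' d.
Proof.
move=> ii ik /allP iSd; apply/allP => x /(mem_subseq (clade_subseq cG ii _)) xGi.
by apply: iSd; apply: xGi; rewrite szG.
Qed.

Lemma fits_root i : i < k -> fits i 0.
Proof.
move=> ik; apply/allP => x xGi; rewrite inE clade0 (perm_mem lS) -(perm_mem lG) -clade0.
by apply: (mem_subseq (clade_subseq cG (leq0n i) _)) xGi; rewrite szG.
Qed.

Lemma fits_diag i d : i < k -> d < k -> fits i d -> d <= i.
Proof.
move=> ik dk /allP iSd.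
have uGi : uniq (clade G i).
  apply: subseq_uniq (clade_subseq cG (leq0n i) _) _; rewrite ?szG // clade0.
  by rewrite (perm_uniq lG) iota_uniq.
have := uniq_leq_size uGi iSd; rewrite !size_clade ?szG ?szS //.
by rewrite (size_leaves_labeled lG) (size_leaves_labeled lS); lia.
Qed.

(* The deepest internal node of [S] whose clade contains the clade of node [i] of [G]. *)
Definition hist_bound := [seq (count (fits i) (iota 0 k)).-1 | i <- iota 0 k].

Lemma nth_hist_bound i : i < k -> nth 0 hist_bound i = (count (fits i) (iota 0 k)).-1.
Proof. by move=> ik; rewrite (nth_map 0) ?size_iota // nth_iota. Qed.

Lemma fitsE i d : i < k -> d < k -> fits i d = (d <= nth 0 hist_bound i).
Proof.
move=> ik dk; rewrite nth_hist_bound //.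
have down a b : a <= b -> b < k -> fits i b -> fits i a by move=> ab bk; apply: fits_down.
have : 0 < count (fits i) (iota 0 k).
  by rewrite -(downclosed_count down (leq_ltn_trans (leq0n i) ik)) fits_root.
by rewrite (downclosed_count down dk); case: (count _ _).
Qed.

Lemma hist_bound_dyck : hist_bound \in dyck (size (inodes G)).
Proof.
have bound_lt i : i < k -> nth 0 hist_bound i < k.
  by move=> ik; rewrite nth_hist_bound //; have := count_iota_leq (fits i) k; lia.
rewrite szG; apply: dyckP => [|i ik|i ik]; first by rewrite size_map size_iota.
  rewrite !nth_hist_bound ?(ltnW ik) // -!subn1 leq_sub2r //.
  by apply: sub_count => d; apply: fits_up.
by apply: (fits_diag ik (bound_lt i ik)); rewrite fitsE ?bound_lt.
Qed.

Lemma is_historyE h : is_history G S h =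
  [forall i, h i <= nth 0 hist_bound i] &&
  [forall i : 'I_(size (inodes G)), forall j : 'I_(size (inodes G)), (i <= j) ==> (h i <= h j)].
Proof.
congr andb; apply: eq_forallb => i.
  have ik : i < k by rewrite -szG.
  by apply: fitsE => //; rewrite -szS.
by apply: eq_forallb => j; rewrite !cater_prefix.
Qed.

Lemma nhist_nbelow : nhist G S = nbelow (size (inodes G)) hist_bound.
Proof.
set a := size (inodes G).
rewrite /nhist (card_ffun_seq (L := [seq l <- dyck a | pointwise_le a l hist_bound])).
- by rewrite size_filter.
- by rewrite filter_uniq // ballot_seqs_uniq.
- move=> l; rewrite mem_filter => /andP[_ dl]; split; first exact: dyck_size.
  apply/(all_nthP 0) => i; rewrite (dyck_size dl) => ik.
  by have := dyck_diag dl ik; rewrite szS -szG; lia.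
- by move=> h; rewrite is_historyE ffun_seq_below // hist_bound_dyck.
Qed.

End Histories.

Lemma size_nbelow_values k :
  2 * size (undup (map (nbelow k) (dyck k))) <= size (dyck k) + 'C(k, k./2).
Proof.
apply: leq_trans (size_undup_map_invariant (g := conj k) _ _) _.
- by move=> M; apply: conj_dyck.
- by move=> M; apply: nbelow_conj.
- by rewrite leq_add2l -size_filter; apply: size_self_conj.
Qed.

Local Open Scope ring_scope.

Theorem proposition3 (n : nat) (hn : (2 <= n)%N) :
  exists s : seq nat,
    [/\ uniq s,
        (forall t, Vn n t <-> t \in s)
      & (size s)%:R <= (1 / 2 : rat) *
           ((n%:R)^-1 * ('C(2 * n - 2, n - 1))%:R + ('C(n - 1, (n - 1)./2))%:R)].
Proof.
set k := n.-1.
have Vn_nbelow t : Vn n t -> t \in map (nbelow k) (dyck k).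
  move=> [G [S [/caterpillar_cater cG /caterpillar_cater cS lG lS <-]]].
  have := hist_bound_dyck cG cS lG lS.
  by rewrite (nhist_nbelow cG cS lG lS) (size_inodes_labeled lG); apply: map_f.
set s := [seq t <- undup (map (nbelow k) (dyck k)) | excluded_middle_informative (Vn n t)].
exists s; split.
- by rewrite filter_uniq ?undup_uniq.
- move=> t; rewrite mem_filter mem_undup; split => [Vt|/andP[/sumboolP//]].
  by rewrite Vn_nbelow // andbT; apply/sumboolP.
have size_s : (2 * size s <= size (dyck k) + 'C(k, k./2))%N.
  by apply: leq_trans (size_nbelow_values k); rewrite leq_mul2l size_filter count_size orbT.
have nk : n = k.+1 by rewrite prednK // ltnW.
rewrite (_ : 2 * n - 2 = k.*2)%N; last by rewrite nk; lia.
rewrite nk subn1 /= -card_dyck natrM mulrA mulVf ?mul1r ?pnatr_eq0 //.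
by move: size_s; rewrite -(ler_nat rat) natrM natrD => size_s; lra.
Qed.
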